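(* Let $\psi(\theta;y,x)$ be an $\mathbb R^q$-valued function on $\Theta\times\mathcal Y\times\mathcal X$, $\Theta\subseteq\mathbb R^q$, and let $\theta(\cdot)$ be the estimating-equation (EE) functional defined by: $\theta(P)$ is the unique solution $\theta\in\Theta$ of $E_P[\psi(\theta;Y,X)]=0$ (assumed to exist uniquely for all joint distributions on which it is evaluated). Fix a Markov kernel $P_{Y|X}$. Then $\theta(\cdot)$ is well-specified for $P_{Y|X}$ if and only if there exists $\theta_0\in\Theta$ such that $E[\psi(\theta_0;Y,X)\mid X=x]=\int\psi(\theta_0;y,x)P_{Y|X=x}(dy)=0$ for all $x\in\mathcal X$.
   Context: A joint distribution $P$ of $(Y,X)$ on $\mathcal Y\times\mathcal X$ is written $P=P_{Y|X}\otimes P_X$, meaning $P(dy,dx)=P_{Y|X=x}(dy)P_X(dx)$, with $P_X$ the marginal of $X$ and $P_{Y|X}$ a Markov kernel defined for every $x$. There is a designated set of ''acceptable'' regressor distributions; $P_{Y|X}\otimes P_X$ is in the domain of $\theta$ for every acceptable $P_X$, and the set is closed under mixing: if $P_X$ is acceptable and $P_X'$ is any distribution (e.g. a point mass $\delta_x$), then $(1-t)P_X+tP_X'$ is acceptable for $0\le t<1$. The functional is well-specified for $P_{Y|X}$ if $\theta(P_{Y|X}\otimes P_X)=\theta(P_{Y|X}\otimes P_X')$ for all acceptable $P_X,P_X'$. All expectations are assumed to exist. *)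

From HB Require Import structures.
From mathcomp Require Import all_boot all_order all_algebra.
From mathcomp Require Import all_classical all_reals all_analysis.
Set Implicit Arguments. Unset Strict Implicit. Unset Printing Implicit Defensive.
Import Order.TTheory GRing.Theory Num.Theory.
Local Open Scope classical_set_scope.
Local Open Scope ring_scope.
Local Open Scope ereal_scope.

(* Expectation of a real function f(y,x) under the joint law
   P = P_{Y|X} (x) P_X, i.e. P(dy,dx) = P_{Y|X=x}(dy) P_X(dx). *)
Definition joint_expect {R : realType} {dX dY : measure_display}
  {X : measurableType dX} {Y : measurableType dY}
  (k : R.-pker X ~> Y) (PX : probability X R) (f : Y -> X -> R) : \bar R :=
  \int[PX]_x \int[k x]_y (f y x)%:E.

Definition cond_expect {R : realType} {dX dY : measure_display}
  {X : measurableType dX} {Y : measurableType dY}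
  (k : R.-pker X ~> Y) (f : Y -> X -> R) (x : X) : \bar R :=
  \int[k x]_y (f y x)%:E.

Definition EE_solution {R : realType} {dX dY : measure_display}
  {X : measurableType dX} {Y : measurableType dY} {q : nat}
  (Theta : set 'rV[R]_q) (psi : 'rV[R]_q -> Y -> X -> 'rV[R]_q)
  (k : R.-pker X ~> Y) (PX : probability X R) (th : 'rV[R]_q) : Prop :=
  Theta th /\
  forall i : 'I_q, joint_expect k PX (fun y x => psi th y x ord0 i) = 0.

Definition is_mixture {R : realType} {dX : measure_display}
  {X : measurableType dX} (t : R) (P P' Q : probability X R) : Prop :=
  forall A, measurable A -> Q A = ((1 - t)%:E * P A + t%:E * P' A).

Definition mixing_closed {R : realType} {dX : measure_display}
  {X : measurableType dX} (acc : probability X R -> Prop) : Prop :=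
  forall (P P' Q : probability X R) (t : R),
    acc P -> (0 <= t < 1)%R -> is_mixture t P P' Q -> acc Q.

(* Well-specification of the EE functional for P_{Y|X}:
   theta(P_{Y|X} (x) P_X) = theta(P_{Y|X} (x) P_X') for all acceptable
   P_X, P_X'; since theta(P) is the unique EE solution, this says any
   two solutions for acceptable marginals coincide. *)
Definition well_specified {R : realType} {dX dY : measure_display}
  {X : measurableType dX} {Y : measurableType dY} {q : nat}
  (Theta : set 'rV[R]_q) (psi : 'rV[R]_q -> Y -> X -> 'rV[R]_q)
  (acc : probability X R -> Prop) (k : R.-pker X ~> Y) : Prop :=
  forall (PX PX' : probability X R) (th th' : 'rV[R]_q),
    acc PX -> acc PX' ->
    EE_solution Theta psi k PX th -> EE_solution Theta psi k PX' th' ->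
    th = th'.

(* If some th0 makes the conditional score E[psi(th0; Y, X) | X = x] vanish for
   every x, then th0 solves the estimating equation for every regressor law, so
   by uniqueness it is theta(P_X) for all of them.  Conversely, fix an acceptable
   P_X with solution th and a point x.  The mixture Q = (P_X + delta_x)/2 is
   acceptable, so well-specification makes th the solution for Q as well, and
   0 = E_Q[g] = (E_{P_X}[g] + g(x))/2 = g(x)/2 for the conditional score g. *)

From HB Require Import structures.
From mathcomp Require Import all_boot all_order all_algebra.
From mathcomp Require Import all_classical all_reals all_analysis.
From mathcomp Require Import measurable_realfun.
From mathcomp Require Import lra.
Set Implicit Arguments. Unset Strict Implicit. Unset Printing Implicit Defensive.
Import Order.TTheory GRing.Theory Num.Theory.
Local Open Scope classical_set_scope.
Local Open Scope ring_scope.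
Local Open Scope ereal_scope.

Section integral_measure_ops.
Context d (T : measurableType d) (R : realType).
Variable D : set T.
Hypothesis mD : measurable D.

Lemma integral_mscale (mu : {measure set T -> \bar R}) (h : {nonneg R})
    (f : T -> \bar R) : mu.-integrable D f ->
  \int[mscale h mu]_(x in D) f x = h%:num%:E * \int[mu]_(x in D) f x.
Proof.
move=> intf; have mf := measurable_int _ intf.
rewrite [LHS]integralE (integralE mu D f).
rewrite (ge0_integral_mscale _ mD _ (measurable_funepos mf)) //.
rewrite (ge0_integral_mscale _ mD _ (measurable_funeneg mf)) //.
rewrite [RHS]muleBr // fin_num_adde_defr //.
exact/integrable_fin_num/integrable_funepos.
Qed.

Lemma integrable_dirac (a : T) (f : T -> \bar R) :
  measurable_fun D f -> f a \is a fin_num -> (\d_a).-integrable D f.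
Proof.
move=> mf fa; apply/integrableP; split => //.
rewrite integral_dirac //; last exact: measurableT_comp.
by rewrite diracE; case: (a \in D); rewrite ?mul1e ?mul0e -?fin_num_abs.
Qed.

Lemma integrable_measure_add (m1 m2 : {measure set T -> \bar R})
    (f : T -> \bar R) : m1.-integrable D f -> m2.-integrable D f ->
  (measure_add m1 m2).-integrable D f.
Proof.
move=> /integrableP[mf f1] /integrableP[_ f2]; apply/integrableP; split => //.
rewrite ge0_integral_measure_add //; last exact: measurableT_comp.
by rewrite lte_add_pinfty.
Qed.

End integral_measure_ops.

Lemma mnormalizeE {d} {T : measurableType d} {R : realType}
    {mu : {measure set T -> \bar R}} (P : probability T R) (A : set T) {r : R} :
  (0 < r)%R -> mu [set: T] = r%:E -> mnormalize mu P A = mu A * (r^-1)%:E.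
Proof. by move=> r_gt0 mu_r; rewrite /mnormalize mu_r /= eqe gt_eqF. Qed.

Section half_mixture.
Context {R : realType} {d : measure_display} {X : measurableType d}.
Variables (P : probability X R) (x : X).

(* The second argument of mnormalize is only a fallback for measures of total
   mass 0 or +oo; here the mass is 2. *)
Definition half_mixture : probability X R := mnormalize (measure_add P \d_x) P.

Let half_ge0 : (0 <= 2^-1 :> R)%R. Proof. by rewrite invr_ge0. Qed.
Let half : {nonneg R} := NngNum half_ge0.

Lemma half_mixture_mscale A :
  half_mixture A = mscale half (measure_add P \d_x) A.
Proof.
have mass2 : measure_add P \d_x [set: X] = 2%:E.
  rewrite measure_addE -[2]/(1 + 1)%E.
  by congr (_ + _); [exact: probability_setT | exact: diracT].
by apply: etrans (mnormalizeE P A _ mass2) _; rewrite // muleC.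
Qed.

Lemma half_mixture_is_mixture : is_mixture 2^-1 P \d_x half_mixture.
Proof.
move=> A _; have -> : (1 - 2^-1 = 2^-1 :> R)%R by lra.
by rewrite -ge0_muleDr // -measure_addE half_mixture_mscale.
Qed.

Lemma integral_half_mixture (g : X -> \bar R) :
  P.-integrable setT g -> g x \is a fin_num ->
  \int[half_mixture]_z g z = (2^-1)%:E * (\int[P]_z g z + g x).
Proof.
move=> intg gx; have mg := measurable_int _ intg.
have intgx := integrable_dirac measurableT mg gx.
rewrite (eq_measure_integral (mscale half (measure_add P \d_x))); last first.
  by move=> A mA _; exact: half_mixture_mscale.
rewrite integral_mscale //; last exact: integrable_measure_add.
by rewrite integral_measure_add // integral_dirac // diracT mul1e.
Qed.

End half_mixture.

Section estimating_equation.
Context {R : realType} {dX dY : measure_display}.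
Context {X : measurableType dX} {Y : measurableType dY} {q : nat}.
Variables (Theta : set 'rV[R]_q) (psi : 'rV[R]_q -> Y -> X -> 'rV[R]_q).
Variable k : R.-pker X ~> Y.

Local Notation psi_ th i := (fun y x => psi th y x ord0 i).

Lemma joint_expect_half_mixture (PX : probability X R) (x : X)
    (f : Y -> X -> R) :
  PX.-integrable setT (cond_expect k f) ->
  (k x).-integrable setT (fun y => (f y x)%:E) ->
  joint_expect k (half_mixture PX x) f =
  (2^-1)%:E * (joint_expect k PX f + cond_expect k f x).
Proof.
by move=> intPX intx; apply: integral_half_mixture => //; exact: integrable_fin_num.
Qed.

Lemma cond_expect0_EE_solution th0 (PX : probability X R) :
  Theta th0 -> (forall x i, cond_expect k (psi_ th0 i) x = 0) ->
  EE_solution Theta psi k PX th0.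
Proof. by move=> Tth0 h0; split => // i; apply: integral0_eq => x _; exact: h0. Qed.

Variable acc : probability X R -> Prop.
Hypothesis EE_unique : forall PX : probability X R, acc PX ->
  exists th, EE_solution Theta psi k PX th /\
    forall th', EE_solution Theta psi k PX th' -> th' = th.

Lemma EE_solution_unique (PX : probability X R) th th' : acc PX ->
  EE_solution Theta psi k PX th -> EE_solution Theta psi k PX th' -> th = th'.
Proof. by move=> /EE_unique[u [_ uniq_u]] /uniq_u -> /uniq_u ->. Qed.

Lemma cond_expect0_well_specified th0 :
  Theta th0 -> (forall x i, cond_expect k (psi_ th0 i) x = 0) ->
  well_specified Theta psi acc k.
Proof.
move=> Tth0 h0 PX PX' th th' accPX accPX' sol sol'.
rewrite (EE_solution_unique accPX sol (cond_expect0_EE_solution PX Tth0 h0)).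
by rewrite (EE_solution_unique accPX' sol' (cond_expect0_EE_solution PX' Tth0 h0)).
Qed.

Hypothesis acc_mix : mixing_closed acc.
Hypothesis int_cond : forall th x i,
  (k x).-integrable setT (fun y => (psi th y x ord0 i)%:E).
Hypothesis int_joint : forall th (PX : probability X R) i,
  acc PX -> PX.-integrable setT (cond_expect k (psi_ th i)).

Lemma well_specified_cond_expect0 {PX : probability X R} {th} :
  well_specified Theta psi acc k -> acc PX -> EE_solution Theta psi k PX th ->
  forall x i, cond_expect k (psi_ th i) x = 0.
Proof.
move=> ws accPX [Tth sol] x i.
have accQ : acc (half_mixture PX x).
  apply: acc_mix accPX _ (half_mixture_is_mixture PX x).
  by rewrite invr_ge0 invf_lt1 // ler0n ltr1n.
have [thQ [solQ _]] := EE_unique accQ.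
have eq_th : th = thQ by exact: ws accPX accQ (conj Tth sol) solQ.
have := solQ.2 i; rewrite -eq_th.
rewrite (joint_expect_half_mixture (int_joint th i accPX) (int_cond th x i)).
rewrite sol add0e.
by move=> /eqP; rewrite mule_eq0 eqe invr_eq0 pnatr_eq0 => /eqP.
Qed.

End estimating_equation.

Theorem lemma3p3p3 (R : realType) (dX dY : measure_display)
  (X : measurableType dX) (Y : measurableType dY) (q : nat)
  (Theta : set 'rV[R]_q) (psi : 'rV[R]_q -> Y -> X -> 'rV[R]_q)
  (acc : probability X R -> Prop) (k : R.-pker X ~> Y)
  (acc_ne : exists PX, acc PX)
  (acc_mix : mixing_closed acc)
  (int_cond : forall (th : 'rV[R]_q) (x : X) (i : 'I_q),
      (k x).-integrable setT (fun y => (psi th y x ord0 i)%:E))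
  (int_joint : forall (th : 'rV[R]_q) (PX : probability X R) (i : 'I_q),
      acc PX -> PX.-integrable setT (cond_expect k (fun y x => psi th y x ord0 i)))
  (EE_unique : forall PX : probability X R, acc PX ->
      exists th, EE_solution Theta psi k PX th /\
        forall th', EE_solution Theta psi k PX th' -> th' = th) :
  well_specified Theta psi acc k <->
  exists2 th0, Theta th0 &
    forall (x : X) (i : 'I_q), cond_expect k (fun y x => psi th0 y x ord0 i) x = 0.
Proof.
split => [ws | [th0 Tth0 h0]]; last exact: (cond_expect0_well_specified EE_unique Tth0 h0).
have [PX accPX] := acc_ne.
have [th [[Tth sol] _]] := EE_unique PX accPX.
exists th => //.
exact: (well_specified_cond_expect0 EE_unique acc_mix int_cond int_joint ws accPX (conj Tth sol)).
Qed.
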